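(* Let $n\ge1$, $s\in(0,1)$ with $n/s\ge2$, $\Omega\subset\mathbb R^n$ a bounded Lipschitz domain, $\mu\in(0,n)$, $M$ satisfying (M1)–(M3) and $g$ satisfying (g1)–(g4). Then any nontrivial weak solution $u\in X_0\setminus\{0\}$ of $$-M(\|u\|^{n/s})(-\Delta)^s_{n/s}u=\left(\int_\Omega\frac{G(y,u)}{|x-y|^\mu}dy\right)g(x,u)\ \text{in }\Omega,\quad u=0\ \text{in }\mathbb R^n\setminus\Omega$$ is nonnegative, i.e. $u\ge0$ a.e. in $\Omega$.
   Context: $X_0=\{u\in W^{s,n/s}(\mathbb R^n): u=0 \text{ in } \mathbb R^n\setminus\Omega\}$ with norm $\|u\|=\left(\int_{\mathbb R^n}\int_{\mathbb R^n}\frac{|u(x)-u(y)|^{n/s}}{|x-y|^{2n}}dxdy\right)^{s/n}$. A weak solution is $u\in X_0$ with $M(\|u\|^{n/s})\int_{\mathbb R^{2n}}\frac{|u(x)-u(y)|^{\frac ns-2}(u(x)-u(y))(\phi(x)-\phi(y))}{|x-y|^{2n}}dxdy=\int_\Omega\left(\int_\Omega\frac{G(y,u)}{|x-y|^\mu}dy\right)g(x,u)\phi\,dx$ for all $\phi\in X_0$. $M:\mathbb R^+\to\mathbb R^+$ continuous, $\hat M(t)=\int_0^tM$; $g(x,t)=h(x,t)\exp(|t|^{\frac n{n-s}})$ continuous, $G(x,t)=\int_0^tg(x,\tau)d\tau$. (M1) $\hat M(t+s)\ge\hat M(t)+\hat M(s)$. (M2) There is $\gamma>1$ with $M(t)/t^{\gamma-1}$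 nonincreasing for $t>0$. (M3) For each $b>0$ there is $\kappa(b)>0$ with $M(t)\ge\kappa$ for $t\ge b$. (g1) $h\in C^1(\overline\Omega\times\mathbb R)$, $h=0$ for $t\le0$, $h>0$ for $t>0$. (g2) For every $\varepsilon>0$, $\lim_{t\to\infty}\sup_xh(x,t)e^{-\varepsilon|t|^{\frac n{n-s}}}=0$, $\lim_{t\to\infty}\inf_xh(x,t)e^{\varepsilon|t|^{\frac n{n-s}}}=\infty$. (g3) There are positive $t_0,T_0,\gamma_0$ with $0<t^{\gamma_0}G(x,t)\le T_0g(x,t)$ on $\Omega\times[t_0,\infty)$. (g4) There is $l>\frac{\gamma n}{2s}-1$ with $g(x,t)/t^l$ increasing in $t>0$ uniformly in $x$. *)

From HB Require Import structures.
From mathcomp Require Import all_boot all_order all_algebra.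
From mathcomp Require Import all_classical all_reals all_analysis.
Set Implicit Arguments.
Unset Strict Implicit.
Unset Printing Implicit Defensive.
Import Order.TTheory GRing.Theory Num.Theory.
Import numFieldNormedType.Exports.
Local Open Scope classical_set_scope.
Local Open Scope ring_scope.

Section Defs.
Variable R : realType.

Definition edot n (x y : 'rV[R]_n) : R := \sum_(i < n) x ord0 i * y ord0 i.
(* Euclidean norm |x| (NOT the max-norm carried by 'rV in the library) *)
Definition enorm n (x : 'rV[R]_n) : R := Num.sqrt (edot x x).
Definition eball n (x0 : 'rV[R]_n) (r : R) : set 'rV[R]_n :=
  [set x | enorm (x - x0) < r].

Definition borelRn n (A : set 'rV[R]_n) : Prop :=
  <<s [set: 'rV[R]_n], [set U | open U] >> A.
Definition borel_fun n (f : 'rV[R]_n -> R) : Prop :=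
  forall B : set R, measurable B -> borelRn (f @^-1` B).

(* Iterated one-dimensional Lebesgue integrals; by Tonelli's theorem this is
   the n-dimensional Lebesgue integral of every nonnegative Borel function. *)
Fixpoint iint (n : nat) : ('rV[R]_n -> \bar R) -> \bar R :=
  match n return ('rV[R]_n -> \bar R) -> \bar R with
  | 0 => fun f => f 0
  | n'.+1 => fun f =>
      (\int[@lebesgue_measure R]_x
         iint (fun y : 'rV[R]_n' => f (row_mx (\row_(j < 1) x) y)))%E
  end.

Definition nnint n (f : 'rV[R]_n -> R) : \bar R :=
  iint (fun x => ((Num.max (f x) 0)%R)%:E).

(* real-valued integral over R^n of a signed function:
   int f^+ - int f^-, with the mathcomp convention of Rintegral
   (fine of the extended value) *)
Definition rint n (f : 'rV[R]_n -> R) : R :=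
  fine (nnint f - nnint (fun x => (- f x)%R))%E.

Definition nnint2 n (F : 'rV[R]_n -> 'rV[R]_n -> R) : \bar R :=
  nnint (fun z : 'rV[R]_(n + n) => F (lsubmx z) (rsubmx z)).
Definition rint2 n (F : 'rV[R]_n -> 'rV[R]_n -> R) : R :=
  rint (fun z : 'rV[R]_(n + n) => F (lsubmx z) (rsubmx z)).

Definition indR n (A : set 'rV[R]_n) (x : 'rV[R]_n) : R :=
  if `[< A x >] then 1 else 0.

Definition bounded_set n (O : set 'rV[R]_n) : Prop :=
  exists r : R, forall x, O x -> enorm x <= r.

(* Standard definition, written without choosing coordinates: near each
   boundary point x0 there is a unit vector e (the "vertical" direction of a
   rotated coordinate system) and a Lipschitz function gam on the
   hyperplane e^perp such that O is locally the subgraph region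
   { x : x.e < gam(P x) } where P x = x - (x.e) e is the orthogonal
   projection onto e^perp. *)
Definition lipschitz_boundary n (O : set 'rV[R]_n) : Prop :=
  forall x0, (closure O `\` O) x0 ->
  exists (r : R) (e : 'rV[R]_n) (gam : 'rV[R]_n -> R) (L : R),
    0 < r /\ enorm e = 1 /\
    (forall a b, edot a e = 0 -> edot b e = 0 ->
        `|gam a - gam b| <= L * enorm (a - b)) /\
    (forall x, eball x0 r x ->
        (O x <-> edot x e < gam (x - edot x e *: e))).

Definition bounded_lipschitz_domain n (O : set 'rV[R]_n) : Prop :=
  open O /\ connected O /\ O !=set0 /\ bounded_set O /\ lipschitz_boundary O.

Definition oint (f : R -> R) (a b : R) : R :=
  if a <= b then fine (\int[@lebesgue_measure R]_(x in `[a, b]) (f x)%:E)%E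
  else - fine (\int[@lebesgue_measure R]_(x in `[b, a]) (f x)%:E)%E.

Definition Mhat (M : R -> R) (t : R) : R := oint M 0 t.

Definition M_basic (M : R -> R) : Prop :=
  (forall t, 0 <= t -> 0 <= M t) /\
  {within `[0, +oo[%classic, continuous M}.
Definition M1 (M : R -> R) : Prop :=
  forall t s, 0 <= t -> 0 <= s -> Mhat M (t + s) >= Mhat M t + Mhat M s.
Definition M2 (M : R -> R) (gam : R) : Prop :=
  1 < gam /\ forall t1 t2, 0 < t1 -> t1 <= t2 ->
     M t2 / powR t2 (gam - 1) <= M t1 / powR t1 (gam - 1).
Definition M3 (M : R -> R) : Prop :=
  forall b, 0 < b -> exists kap : R, 0 < kap /\ forall t, b <= t -> kap <= M t.

Definition crit_exp (n : nat) (s : R) : R := n%:R / (n%:R - s).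

Definition gfun n (s : R) (h : 'rV[R]_n -> R -> R) (x : 'rV[R]_n) (t : R) : R :=
  h x t * expR (powR `|t| (crit_exp n s)).
Definition Gfun n (s : R) (h : 'rV[R]_n -> R -> R) (x : 'rV[R]_n) (t : R) : R :=
  oint (gfun s h x) 0 t.

(* h in C^1(closure O x R): h agrees on closure O x R with a function on
   R^n x R all of whose directional derivatives exist everywhere and are
   continuous (hence it is continuously differentiable). *)
Definition C1_on_closure n (O : set 'rV[R]_n) (h : 'rV[R]_n -> R -> R) : Prop :=
  exists H : 'rV[R]_n * R -> R,
    (forall x t, closure O x -> H (x, t) = h x t) /\
    (forall v p, derivable H p v) /\
    (forall v, continuous (fun p => ('D_v H p : R))).

Definition g1 n (O : set 'rV[R]_n) (h : 'rV[R]_n -> R -> R) : Prop :=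
  C1_on_closure O h /\
  (forall x t, closure O x -> t <= 0 -> h x t = 0) /\
  (forall x t, closure O x -> 0 < t -> 0 < h x t).

Definition g2 n (s : R) (O : set 'rV[R]_n) (h : 'rV[R]_n -> R -> R) : Prop :=
  forall eps : R, 0 < eps ->
   (forall eta : R, 0 < eta -> exists T : R, forall t x, T <= t -> O x ->
       h x t * expR (- (eps * powR `|t| (crit_exp n s)))  <= eta) /\
   (forall K : R, exists T : R, forall t x, T <= t -> O x ->
       K <= h x t * expR (eps * powR `|t| (crit_exp n s))).

Definition g3 n (s : R) (O : set 'rV[R]_n) (h : 'rV[R]_n -> R -> R) : Prop :=
  exists t0 T0 gam0 : R, 0 < t0 /\ 0 < T0 /\ 0 < gam0 /\
    forall x t, O x -> t0 <= t ->
      0 < powR t gam0 * Gfun s h x t /\ powR t gam0 * Gfun s h x t <= T0 * gfun s h x t.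

Definition g4 n (s : R) (O : set 'rV[R]_n) (h : 'rV[R]_n -> R -> R) (l : R) : Prop :=
  forall x t1 t2, O x -> 0 < t1 -> t1 < t2 ->
    gfun s h x t1 / powR t1 l < gfun s h x t2 / powR t2 l.

Definition pexp (n : nat) (s : R) : R := n%:R / s.

Definition gagliardo n (s : R) (u : 'rV[R]_n -> R) : \bar R :=
  nnint2 (fun x y => powR `|u x - u y| (pexp n s) / enorm (x - y) ^+ (2 * n)).

Definition X0 n (s : R) (O : set 'rV[R]_n) (u : 'rV[R]_n -> R) : Prop :=
  borel_fun u /\
  (forall x, ~ O x -> u x = 0) /\
  (nnint (fun x => powR `|u x| (pexp n s)) < +oo)%E /\
  (gagliardo s u < +oo)%E.

Definition X0norm n (s : R) (u : 'rV[R]_n -> R) : R :=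
  powR (fine (gagliardo s u)) (s / n%:R).

Definition weak_solution n (s mu : R) (O : set 'rV[R]_n) (M : R -> R)
    (h : 'rV[R]_n -> R -> R) (u : 'rV[R]_n -> R) : Prop :=
  X0 s O u /\
  forall phi, X0 s O phi ->
    M (powR (X0norm s u) (pexp n s)) *
      rint2 (fun x y =>
        powR `|u x - u y| (pexp n s - 2) * (u x - u y) * (phi x - phi y)
          / enorm (x - y) ^+ (2 * n))
    =
    rint (fun x =>
        indR O x *
        fine (nnint (fun y => indR O y * Gfun s h y (u y) / powR (enorm (x - y)) mu))
        * gfun s h x (u x) * phi x).

End Defs.

(* Test the equation with phi = min(u, 0).  Since g(x, t) = 0 for t <= 0, the
   right-hand side vanishes.  On the left, with a = u(x) - u(y) and
   b = phi(x) - phi(y), one has |b|^p <= |a|^(p-2) a b <= |a|^p pointwise, so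
   the integral is finite and dominates the Gagliardo seminorm [phi]^p, while
   its factor M(||u||^p) is positive by (M3) because u is nontrivial.  Hence
   [phi] = 0.  A function vanishing outside a bounded set with zero Gagliardo
   seminorm vanishes a.e.: integrating |v(x) - v(y)|^p |x - y|^(-2n) over y in a
   unit cube far from the set bounds a positive multiple of the L^p norm of v. *)

From Pilot Require Import Defs.
From HB Require Import structures.
From mathcomp Require Import all_boot all_order all_algebra.
From mathcomp Require Import all_classical all_reals all_analysis measurable_realfun.
From mathcomp Require Import lra.
Import Order.TTheory GRing.Theory Num.Theory.
Import numFieldNormedType.Exports.
Local Open Scope classical_set_scope.
Local Open Scope ring_scope.

Lemma row_mx_allP {T : Type} {n} (P : 'I_n.+1 -> T -> Prop) (t : T) (y : 'rV[T]_n) :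
  (forall i, P i ((row_mx (\row_(j < 1) t) y : 'rV_(1 + n)) ord0 i)) <->
  (P ord0 t /\ forall j : 'I_n, P (lift ord0 j) (y ord0 j)).
Proof.
have e0 : (ord0 : 'I_(1 + n)) = lshift n ord0 by apply/val_inj.
have eS j : lift ord0 j = rshift 1 j :> 'I_(1 + n) by apply/val_inj.
split=> [h|[h0 h] i].
- split; first by have := h ord0; rewrite e0 row_mxEl mxE.
  by move=> j; have := h (lift ord0 j); rewrite eS row_mxEr.
- case: (@splitP 1 n i) => [k|k] ik.
  + have -> : i = lshift n k by apply/val_inj.
    by rewrite row_mxEl mxE (ord1 k) -e0.
  + have -> : i = rshift 1 k by apply/val_inj.
    by rewrite row_mxEr -eS.
Qed.

Section IteratedIntegral.
Context {R : realType}.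
Local Notation RR := (measurableTypeR R).

(* [nnint] integrates out one real coordinate at a time; to apply Tonelli at
   every stage, [rowX_measurable A] says that [A] is measurable in the product
   of [T] with [n] copies of the real line, the first coordinate of the row
   being moved into the parameter space at each step. *)
Fixpoint rowX_measurable (n : nat) : forall d (T : measurableType d),
    set (T * 'rV[R]_n) -> Prop :=
  match n with
  | 0 => fun d T A => measurable [set x | A (x, 0)]
  | n'.+1 => fun d T A =>
      @rowX_measurable n' _ (T * RR)%type
        [set q | A (q.1.1, row_mx (\row_(j < 1) (q.1.2 : R)) q.2)]
  end.
Arguments rowX_measurable {n d T}.

Lemma rowX_measurable0 {n d} {T : measurableType d} :
  @rowX_measurable n d T set0.
Proof.
elim: n d T => [|n IH] d T /=; first exact: measurable0.
exact: (IH _ (T * RR)%type).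
Qed.

Lemma rowX_measurableC {n d} {T : measurableType d} (A : set (T * 'rV[R]_n)) :
  rowX_measurable A -> rowX_measurable (~` A).
Proof.
elim: n d T A => [|n IH] d T A /=; first exact: measurableC.
exact: (IH _ (T * RR)%type).
Qed.

Lemma rowX_measurableI {n d} {T : measurableType d} (A B : set (T * 'rV[R]_n)) :
  rowX_measurable A -> rowX_measurable B -> rowX_measurable (A `&` B).
Proof.
elim: n d T A B => [|n IH] d T A B /=; first exact: measurableI.
exact: (IH _ (T * RR)%type).
Qed.

Lemma rowX_measurable_bigcup {n d} {T : measurableType d}
    (F : (set (T * 'rV[R]_n))^nat) :
  (forall k, rowX_measurable (F k)) -> rowX_measurable (\bigcup_k F k).
Proof.
elim: n d T F => [|n IH] d T F /= mF.
  have := bigcupT_measurable _ mF.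
  by congr measurable; apply/seteqP; split => x /= [k _ Fx]; exists k.
have := IH _ (T * RR)%type
  (fun k => [set q | F k (q.1.1, row_mx (\row_(j < 1) (q.1.2 : R)) q.2)]) mF.
by congr rowX_measurable; apply/seteqP; split => x /= [k _ Fx]; exists k.
Qed.

Lemma rowX_measurable_fst {n d} {T : measurableType d} (C : set T) :
  measurable C -> @rowX_measurable n d T [set p | C p.1].
Proof.
elim: n d T C => [|n IH] d T C mC //=.
have := IH _ (T * RR)%type (C `*` setT) (measurableX mC measurableT).
by congr rowX_measurable; apply/seteqP; split => x /=; [case|].
Qed.

Lemma rowX_measurable_box {n d} {T : measurableType d} (a b : 'I_n -> R) :
  @rowX_measurable n d T [set p : T * 'rV[R]_n | forall i, a i < p.2 ord0 i < b i].
Proof.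
elim: n d T a b => [|n IH] d T a b /=.
  rewrite (_ : [set x | _] = setT); first exact: measurableT.
  by apply/seteqP; split => // x _ [].
have mI : measurable (setT `*` [set` `](a ord0), (b ord0)[ ] : set (T * RR)).
  by apply: measurableX => //; exact: measurable_itv.
have := rowX_measurableI _ _ (rowX_measurable_fst (n := n) _ mI)
  (IH _ (T * RR)%type (fun j => a (lift ord0 j)) (fun j => b (lift ord0 j))).
congr rowX_measurable; apply/seteqP; split => q /=.
  case=> [[_ /=]]; rewrite in_itv /= => h1 h2.
  exact/(row_mx_allP (fun i z => a i < z < b i)).
by move/(row_mx_allP (fun i z => a i < z < b i)) => [h1 h2]; rewrite in_itv.
Qed.

Definition rat_box {n} (q : {ffun 'I_n -> rat} * {ffun 'I_n -> rat}) : set 'rV[R]_n :=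
  [set y | forall i, ratr (q.1 i) < y ord0 i < ratr (q.2 i)].

Lemma open_rat_box {n} (U : set 'rV[R]_n) y : open U -> U y ->
  exists q, rat_box q y /\ rat_box q `<=` U.
Proof.
rewrite openE => /[apply] /nbhs_ballP [e /= e0 sU].
have hA i : exists q : rat, ratr q \in `](y ord0 i - e), (y ord0 i)[.
  by apply: rat_in_itvoo; rewrite ltrBlDr ltrDl.
have hB i : exists q : rat, ratr q \in `](y ord0 i), (y ord0 i + e)[.
  by apply: rat_in_itvoo; rewrite ltrDl.
exists ([ffun i => xchoose (hA i)], [ffun i => xchoose (hB i)]); split.
  move=> i /=; rewrite !ffunE.
  have := xchooseP (hA i); have := xchooseP (hB i).
  by rewrite !in_itv /= => /andP[-> _] /andP[_ ->].
move=> z /= hz; apply: sU; rewrite mx_norm_ball /=.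
change (mx_norm (y - z) < e); rewrite mx_normrE.
apply/bigmax_ltP; split => // -[i j] _ /=; rewrite (ord1 i).
have := hz j; rewrite !ffunE.
have := xchooseP (hA j); have := xchooseP (hB j).
rewrite !in_itv /= !mxE => /andP[_ h1] /andP[h2 _] /andP[h3 h4].
rewrite ltr_norml; apply/andP; split; lra.
Qed.

Lemma rowX_measurable_open {n d} {T : measurableType d} (U : set 'rV[R]_n) :
  open U -> @rowX_measurable n d T [set p | U p.2].
Proof.
move=> oU.
pose F k : set (T * 'rV[R]_n) :=
  if unpickle k is Some q then
    if pselect (rat_box q `<=` U) is left _ then [set p | rat_box q p.2] else set0
  else set0.
rewrite (_ : [set p | U p.2] = \bigcup_k F k).
  apply: rowX_measurable_bigcup => k; rewrite /F.
  case: (unpickle k) => [q|]; last exact: rowX_measurable0.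
  case: pselect => _; last exact: rowX_measurable0.
  exact: rowX_measurable_box.
apply/seteqP; split => p /=.
  move=> Up; have [q [bq sq]] := open_rat_box _ _ oU Up.
  by exists (pickle q) => //; rewrite /F pickleK; case: pselect.
case=> k _; rewrite /F; case: (unpickle k) => [q|] //.
by case: pselect => // sq /sq.
Qed.

Lemma rowX_measurable_borel {n d} {T : measurableType d} (A : set 'rV[R]_n) :
  borelRn A -> @rowX_measurable n d T [set p | A p.2].
Proof.
apply: (@smallest_sub _ _ _ [set A | rowX_measurable [set p | A p.2]]); last first.
  by move=> U; exact: rowX_measurable_open.
split=> [|B mB|F mF] /=.
- exact: rowX_measurable0.
- rewrite (_ : [set p | _] = ~` [set p | B p.2]); first exact: rowX_measurableC.
  by apply/seteqP; split => p /=; [case|split].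
- rewrite (_ : [set p | _] = \bigcup_k [set p | F k p.2]).
    exact: rowX_measurable_bigcup.
  by apply/seteqP; split => p /= [k _ Fp]; exists k.
Qed.

Definition rowX_measurable_fun {n d} {T : measurableType d}
    (f : T -> 'rV[R]_n -> \bar R) :=
  forall B : set (\bar R), measurable B -> rowX_measurable [set p | B (f p.1 p.2)].

Lemma rowX_measurable_fun_comp {n d} {T : measurableType d}
    (v : 'rV[R]_n -> R) (psi : R -> \bar R) :
  borel_fun v -> measurable_fun setT psi ->
  rowX_measurable_fun (fun (_ : T) y => psi (v y)).
Proof.
move=> bv mpsi B mB.
have := mpsi measurableT B mB; rewrite setTI => mB'.
exact: (rowX_measurable_borel _ (bv _ mB')).
Qed.

Lemma iint_ge0 {n} (f : 'rV[R]_n -> \bar R) :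
  (forall x, (0 <= f x)%E) -> (0 <= iint f)%E.
Proof.
elim: n f => [|n IH] f f0 /=; first exact: f0.
by apply: integral_ge0 => t _; apply: IH.
Qed.

Lemma measurable_iint {n d} {T : measurableType d} (f : T -> 'rV[R]_n -> \bar R) :
  rowX_measurable_fun f -> (forall x y, (0 <= f x y)%E) ->
  measurable_fun setT (fun x => iint (f x)).
Proof.
elim: n d T f => [|n IH] d T f mf f0 /=.
  by move=> _ B mB; rewrite setTI; exact: mf.
have mF := IH _ (T * RR)%type
  (fun q y => f q.1 (row_mx (\row_(j < 1) (q.2 : R)) y)) mf (fun q y => f0 _ _).
by have := @measurable_fun_fubini_tonelli_F _ _ _ _ R (@lebesgue_measure R) _ mF
  (fun q => @iint_ge0 n _ (fun y => f0 _ _)).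
Qed.

Lemma iint_eq0_transfer {n d} {T : measurableType d} (f g : T -> 'rV[R]_n -> \bar R) :
  rowX_measurable_fun f -> rowX_measurable_fun g ->
  (forall x y, (0 <= f x y)%E) -> (forall x y, (0 <= g x y)%E) ->
  (forall x y, f x y = 0%E -> g x y = 0%E) ->
  forall x, iint (f x) = 0%E -> iint (g x) = 0%E.
Proof.
elim: n d T f g => [|n IH] d T f g mf mg f0 g0 fg x /=; first exact: fg.
pose f' (q : T * RR) y := f q.1 (row_mx (\row_(j < 1) (q.2 : R)) y).
pose g' (q : T * RR) y := g q.1 (row_mx (\row_(j < 1) (q.2 : R)) y).
have IH' := IH _ _ f' g' mf mg (fun q y => f0 _ _) (fun q y => g0 _ _)
  (fun q y => fg _ _).
have mFx := measurable_fun_pair2 x (measurable_iint f' mf (fun q y => f0 _ _)).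
have mGx := measurable_fun_pair2 x (measurable_iint g' mg (fun q y => g0 _ _)).
move=> F0; have : (\int[@lebesgue_measure R]_t `|iint (f' (x, t))| = 0)%E.
  rewrite -[RHS]F0; apply: eq_integral => t _.
  by rewrite gee0_abs //; apply: iint_ge0 => y; exact: f0.
move/(ae_eq_integral_abs _ measurableT mFx) => aeF.
have aeG : ae_eq (@lebesgue_measure R) setT (fun t => iint (g' (x, t))) (cst 0%E).
  by apply: filterS aeF => t h /h /= Ft; exact: IH'.
rewrite (ae_eq_integral (cst 0%E) _ measurableT mGx (measurable_cst _) aeG).
exact: integral0.
Qed.

(* No measurability is needed: the integral of a nonnegative function is the
   supremum of the integrals of the simple functions below it. *)
Lemma ge0_le_integralT (f g : RR -> \bar R) :
  (forall x, (0 <= f x)%E) -> (forall x, (f x <= g x)%E) ->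
  (\int[@lebesgue_measure R]_x f x <= \int[@lebesgue_measure R]_x g x)%E.
Proof.
move=> f0 fg; have g0 x : (0 <= g x)%E := le_trans (f0 x) (fg x).
rewrite (ge0_integralTE _ f0) (ge0_integralTE _ g0) /=.
apply: ge_ereal_sup => _ [k kf <-]; apply: ereal_sup_ubound; exists k => //= x.
exact: le_trans (kf x) (fg x).
Qed.

Lemma iint_le {n} (f g : 'rV[R]_n -> \bar R) : (forall x, (0 <= f x)%E) ->
  (forall x, (f x <= g x)%E) -> (iint f <= iint g)%E.
Proof.
elim: n f g => [|n IH] f g f0 fg /=; first exact: fg.
apply: ge0_le_integralT => t; first by apply: iint_ge0 => y; exact: f0.
by apply: IH => y; [exact: f0 | exact: fg].
Qed.

Lemma iint_row_mx m k (F : 'rV[R]_(m + k) -> \bar R) :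
  iint F = iint (fun x : 'rV[R]_m => iint (fun y : 'rV[R]_k => F (row_mx x y))).
Proof.
elim: m F => [|m IH] F /=.
  congr iint; apply/funext => y; congr F; apply/(@rowP _ k) => j.
  have := row_mxEr (0 : 'rV[R]_0) y 0 j.
  by have -> : rshift 0 j = j :> 'I_k by apply/val_inj.
apply: eq_integral => t _; rewrite (IH (fun w => F (row_mx (\row_(j < 1) t) w))).
congr iint; apply/funext => x; congr iint; apply/funext => y.
by rewrite row_mxA castmx_id.
Qed.

Lemma iint0 n : iint (fun _ : 'rV[R]_n => 0%E) = 0%E.
Proof.
elim: n => [|n IH] //=.
under eq_integral do rewrite IH.
exact: integral0.
Qed.

Definition unit_cube n (a : R) : set 'rV[R]_n :=
  [set y | forall i, a <= y ord0 i <= a + 1].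

Lemma indR_unit_cube_row_mx n a t (y : 'rV[R]_n) :
  indR (unit_cube n.+1 a) (row_mx (\row_(j < 1) t) y) =
  \1_(`[a, a + 1]%classic) t * indR (unit_cube n a) y.
Proof.
pose P (_ : 'I_n.+1) (z : R) := a <= z <= a + 1.
rewrite /indR indicE; case: asboolP => [/(row_mx_allP P) [h1 h2]|h].
  by rewrite mem_set ?in_itv //= asboolT // mulr1.
case: asboolP => h2; last by rewrite mulr0.
have [ht|ht] := boolP (t \in _); last by rewrite mul0r.
by exfalso; apply/h/(row_mx_allP P); split => //; move: ht; rewrite inE /= in_itv.
Qed.

Lemma iint_unit_cube n a (c : R) : 0 <= c ->
  iint (fun y : 'rV[R]_n => (c * indR (unit_cube n a) y)%:E) = c%:E.
Proof.
elim: n c => [|n IH] c c0 /=; first by rewrite /indR asboolT ?mulr1 // => -[].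
pose I := `[a, a + 1]%classic.
transitivity (\int[@lebesgue_measure R]_t (c * \1_I t)%:E)%E.
  apply: eq_integral => t _; under eq_fun do rewrite indR_unit_cube_row_mx mulrA.
  by apply: IH; rewrite mulr_ge0 // indicE.
transitivity (\int[@lebesgue_measure R]_(t in I) (cst c%:E) t)%E.
  rewrite [RHS]integral_mkcond; apply: eq_integral => t _.
  by rewrite indicE patchE; case: (t \in I); rewrite ?mulr1 ?mulr0.
rewrite integral_cst; last exact: measurable_itv.
rewrite -[RHS]mule1; congr (_ * _)%E.
have := @lebesgue_measure_itv R `[a, a + 1].
by rewrite /= lte_fin ltrDl ltr01 -EFinD addrAC subrr add0r.
Qed.

End IteratedIntegral.

Section GagliardoSeminorm.
Context {R : realType}.

Lemma edot_ge0 {n} (x : 'rV[R]_n) : 0 <= edot x x.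
Proof. by apply: sumr_ge0 => i _; rewrite -expr2 sqr_ge0. Qed.

Lemma enorm_ge0 {n} (x : 'rV[R]_n) : 0 <= enorm x.
Proof. exact: sqrtr_ge0. Qed.

Lemma enorm_sqr {n} (x : 'rV[R]_n) : enorm x ^+ 2 = edot x x.
Proof. by rewrite /enorm sqr_sqrtr // edot_ge0. Qed.

Lemma sqr_coord0_le_edot {n} (x : 'rV[R]_n.+1) : x ord0 ord0 ^+ 2 <= edot x x.
Proof.
rewrite /edot (bigD1 ord0) //= -expr2 lerDl.
by apply: sumr_ge0 => i _; rewrite -expr2 sqr_ge0.
Qed.

Lemma coord0_le_enorm {n} (x : 'rV[R]_n.+1) : x ord0 ord0 <= enorm x.
Proof.
apply: le_trans (ler_norm _) _; rewrite -sqrtr_sqr.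
by rewrite /enorm ler_sqrt ?sqr_ge0 ?edot_ge0 ?sqr_coord0_le_edot.
Qed.

Lemma edot_subr_le {n} (x y : 'rV[R]_n) :
  edot (x - y) (x - y) <= 2 * edot x x + 2 * edot y y.
Proof.
rewrite /edot !mulr_sumr -big_split /=; apply: ler_sum => i _; rewrite !mxE.
have := sqr_ge0 (x ord0 i + y ord0 i); rewrite expr2; nra.
Qed.

Lemma edot_unit_cube_le {n a} (y : 'rV[R]_n) : 0 <= a -> unit_cube n a y ->
  edot y y <= n%:R * (a + 1) ^+ 2.
Proof.
move=> a0 hy.
have -> : n%:R * (a + 1) ^+ 2 = \sum_(i < n) (a + 1) ^+ 2.
  by rewrite sumr_const card_ord mulr_natl.
by apply: ler_sum => i _; have /andP[h1 h2] := hy i; nra.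
Qed.

Section FarCube.
Context {n : nat} {r a : R} {x y : 'rV[R]_n.+1}.
Hypotheses (x_le_r : enorm x <= r) (r_lt_a : r < a) (a_ge0 : 0 <= a)
  (y_cube : unit_cube n.+1 a y).

Lemma edot_sub_far_cube_gt0 : 0 < edot (x - y) (x - y).
Proof.
have /andP[ay _] := y_cube ord0.
have xy : x ord0 ord0 < y ord0 ord0.
  exact: le_lt_trans (le_trans (coord0_le_enorm x) x_le_r) (lt_le_trans r_lt_a ay).
have := sqr_coord0_le_edot (x - y); apply: lt_le_trans; rewrite !mxE.
by rewrite -sqrrN opprB expr2 mulr_gt0 // subr_gt0.
Qed.

Lemma edot_sub_far_cube_le :
  edot (x - y) (x - y) <= 2 * r ^+ 2 + 2 * (n.+1%:R * (a + 1) ^+ 2).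
Proof.
apply: le_trans (edot_subr_le x y) _; apply: lerD; rewrite ler_pM2l //.
  by rewrite -enorm_sqr !expr2 ler_pM ?enorm_ge0.
exact: edot_unit_cube_le.
Qed.

End FarCube.

Lemma far_unit_cube_outside {n} {O : set 'rV[R]_n.+1} {r a y} :
  (forall x, O x -> enorm x <= r) -> r < a -> unit_cube n.+1 a y -> ~ O y.
Proof.
move=> Or ra /(_ ord0) /andP[ay _] /Or yr.
by have := coord0_le_enorm y; lra.
Qed.

(* Against points [y] of a unit cube lying beyond the bounded set [O], the
   kernel [|x - y|^(-2n)] is bounded below, while [v y = 0]. *)
Lemma powR_le_gagliardo_kernel {n} {O : set 'rV[R]_n.+1} {v : 'rV[R]_n.+1 -> R}
    {p r a : R} x y :
  0 < p -> (forall x, O x -> enorm x <= r) -> (forall x, ~ O x -> v x = 0) ->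
  r < a -> 0 <= a ->
  (2 * r ^+ 2 + 2 * (n.+1%:R * (a + 1) ^+ 2)) ^- n.+1 * powR `|v x| p
    * indR (unit_cube n.+1 a) y
  <= powR `|v x - v y| p / enorm (x - y) ^+ (2 * n.+1).
Proof.
move=> p0 Or v0 ra a0.
have rhs_ge0 : 0 <= powR `|v x - v y| p / enorm (x - y) ^+ (2 * n.+1).
  by rewrite divr_ge0 ?powR_ge0 ?exprn_ge0 ?enorm_ge0.
rewrite /indR; case: asboolP => [y_cube|_]; last by rewrite mulr0.
rewrite mulr1 (v0 _ (far_unit_cube_outside Or ra y_cube)) subr0.
have [Ox|/v0 ->] := pselect (O x); last by rewrite normr0 powR0 ?gt_eqF // mulr0 mul0r.
have := edot_sub_far_cube_gt0 (Or _ Ox) ra y_cube.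
have := edot_sub_far_cube_le (Or _ Ox) a0 y_cube.
set e := edot _ _ => e_le e_gt0.
have D_gt0 := lt_le_trans e_gt0 e_le.
rewrite exprM enorm_sqr -/e mulrC ler_wpM2l ?powR_ge0 //.
rewrite lef_pV2 ?posrE ?exprn_gt0 //.
by rewrite lerXn2r ?nnegrE ?(ltW e_gt0) ?(ltW D_gt0).
Qed.

Lemma support_null_of_iint_powR_eq0 {n} (v : 'rV[R]_n -> R) (p c : R) :
  0 < c -> borel_fun v -> iint (fun x => (c * powR `|v x| p)%:E) = 0%E ->
  nnint (indR [set y | v y <> 0]) = 0%E.
Proof.
move=> c0 bv.
pose f (_ : measurableTypeR R) y := (c * powR `|v y| p)%:E.
pose g (_ : measurableTypeR R) y := (Num.max (indR [set y | v y <> 0] y) 0)%:E.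
have mf : rowX_measurable_fun f.
  apply: (rowX_measurable_fun_comp v (fun t => (c * powR `|t| p)%:E) bv).
  apply/measurable_EFinP/measurable_funM; first exact: measurable_cst.
  exact: measurableT_comp (measurable_powR p) (@normr_measurable R setT).
have mg : rowX_measurable_fun g.
  apply: (rowX_measurable_fun_comp v
    (fun t : R => (Num.max (if `[< t <> 0 >] then 1 else 0) 0)%:E) bv).
  rewrite (_ : (fun t => _) = EFin \o \1_(~` [set 0])).
    by apply/measurable_EFinP/measurable_indic/measurableC.
  apply/funext => t /=; rewrite indicE.
  case: asboolP => [t0|t0]; first by rewrite mem_set // max_l ?ler01.
  by rewrite maxxx memNset.
apply: (iint_eq0_transfer f g mf mg _ _ _ 0).
- by move=> x y; rewrite lee_fin mulr_ge0 ?powR_ge0 ?ltW.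
- by move=> x y; rewrite lee_fin le_max lexx orbT.
- move=> x y /eqP; rewrite eqe mulf_eq0 gt_eqF //= powR_eq0 normr_eq0.
  by case/andP=> /eqP v0 _; rewrite /g /indR asboolF ?maxxx.
Qed.

Lemma nnint_le {n} (f g : 'rV[R]_n -> R) :
  (forall x, f x <= g x) -> (nnint f <= nnint g)%E.
Proof.
move=> fg; apply: iint_le => x; rewrite lee_fin.
- by rewrite le_max lexx orbT.
- by rewrite ge_max !le_max fg lexx !orbT.
Qed.

Lemma nnint_ge0 {n} (f : 'rV[R]_n -> R) : (0 <= nnint f)%E.
Proof. by apply: iint_ge0 => x; rewrite lee_fin le_max lexx orbT. Qed.

Lemma support_null_of_gagliardo_eq0 {n} {O : set 'rV[R]_n.+1} {v : 'rV[R]_n.+1 -> R}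
    {s : R} :
  0 < pexp n.+1 s -> Defs.bounded_set O -> borel_fun v ->
  (forall x, ~ O x -> v x = 0) -> gagliardo s v = 0%E ->
  nnint (indR [set y | v y <> 0]) = 0%E.
Proof.
set p := pexp n.+1 s; move=> p0 [r Or] bv v0 gag0; pose a : R := `|r| + 1.
have ra : r < a by rewrite /a; have := ler_norm r; lra.
have a0 : 0 <= a by rewrite /a; have := normr_ge0 r; lra.
pose c := (2 * r ^+ 2 + 2 * (n.+1%:R * (a + 1) ^+ 2)) ^- n.+1.
have c0 : 0 < c.
  have r2 := sqr_ge0 r.
  have a2 : 0 < n.+1%:R * (a + 1) ^+ 2 by rewrite mulr_gt0 ?exprn_gt0 //; lra.
  by rewrite invr_gt0 exprn_gt0 //; lra.
apply: (support_null_of_iint_powR_eq0 v p c c0 bv); apply/le_anti/andP; split; last first.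
  by apply: iint_ge0 => x; rewrite lee_fin mulr_ge0 ?powR_ge0 ?ltW.
have -> : iint (fun x => (c * powR `|v x| p)%:E) = iint (fun z : 'rV[R]_(n.+1 + n.+1) =>
    (c * powR `|v (lsubmx z)| p * indR (unit_cube n.+1 a) (rsubmx z))%:E).
  rewrite iint_row_mx; congr iint; apply/funext => x.
  rewrite -(iint_unit_cube n.+1 a _ (mulr_ge0 (ltW c0) (powR_ge0 _ _))).
  by congr iint; apply/funext => y; rewrite row_mxKl row_mxKr.
rewrite -gag0; apply: iint_le => z; rewrite lee_fin.
- by rewrite !mulr_ge0 ?powR_ge0 ?(ltW c0) // /indR; case: asboolP.
- by rewrite le_max (powR_le_gagliardo_kernel _ _ p0 Or v0 ra a0).
Qed.

Lemma nnint_cst0 n : nnint (fun _ : 'rV[R]_n => 0) = 0%E.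
Proof. by rewrite /nnint maxxx iint0. Qed.

Lemma rint_ge0E {n} (f : 'rV[R]_n -> R) : (forall x, 0 <= f x) -> rint f = fine (nnint f).
Proof.
move=> f0; rewrite /rint (_ : nnint (fun x => - f x) = 0%E) ?sube0 //.
rewrite -(nnint_cst0 n) /nnint; congr iint; apply/funext => x.
by rewrite maxxx max_r // oppr_le0.
Qed.

Lemma rint_cst0 n : rint (fun _ : 'rV[R]_n => 0) = 0.
Proof. by rewrite rint_ge0E // nnint_cst0. Qed.

Lemma powR_norm_add2 (x q : R) : 0 <= q -> powR `|x| (q + 2) = powR `|x| q * x ^+ 2.
Proof.
move=> q0; have [->|x0] := eqVneq x 0.
  by rewrite normr0 expr0n mulr0 powR0 // gt_eqF // ltr_wpDl.
by rewrite powRD ?normr_eq0 ?x0 ?implybT // powR_mulrn ?normr_ge0 // real_normK ?num_real.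
Qed.

Lemma powR_sub_min0_bounds (a b p : R) : 2 <= p ->
  powR `|Num.min a 0 - Num.min b 0| p
    <= powR `|a - b| (p - 2) * (a - b) * (Num.min a 0 - Num.min b 0)
    <= powR `|a - b| p.
Proof.
move=> p2; set m := Num.min a 0 - Num.min b 0; have q0 : 0 <= p - 2 by lra.
have [mm ma] : m * m <= (a - b) * m /\ (a - b) * m <= (a - b) * (a - b).
  have := sqr_ge0 (a - b); rewrite expr2 /m => ab2.
  by have [ha|ha] := leP a 0; have [hb|hb] := leP b 0; split; nra.
have m_le : `|m| <= `|a - b|.
  rewrite -(ler_pXn2r (n := 2)) ?nnegrE ?normr_ge0 //.
  by rewrite !real_normK ?num_real // !expr2; lra.
have pow_ge0 := powR_ge0 `|a - b| (p - 2).
have pow_p x : powR `|x| p = powR `|x| (p - 2) * x ^+ 2.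
  by rewrite -powR_norm_add2 // subrK.
rewrite !pow_p -!mulrA !expr2; apply/andP; split.
  apply: le_trans (ler_wpM2l pow_ge0 mm).
  apply: ler_pM; [exact: powR_ge0 | by rewrite -expr2 sqr_ge0 | | exact: lexx].
  by apply: ge0_ler_powR; rewrite ?nnegrE ?normr_ge0.
exact: ler_wpM2l.
Qed.

Lemma norm_min0_le (a : R) : `|Num.min a 0| <= `|a|.
Proof. by have [ha|ha] := leP a 0; rewrite ?normr0 ?normr_ge0. Qed.

Lemma norm_min0_sub_le (a b : R) : `|Num.min a 0 - Num.min b 0| <= `|a - b|.
Proof.
rewrite -(ler_pXn2r (n := 2)) ?nnegrE ?normr_ge0 // !real_normK ?num_real // !expr2.
have := sqr_ge0 (a - b); rewrite expr2 => ab2.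
by have [ha|ha] := leP a 0; have [hb|hb] := leP b 0; nra.
Qed.

Lemma X0_min0 {n} {s : R} {O : set 'rV[R]_n} {u : 'rV[R]_n -> R} :
  0 <= pexp n s -> X0 s O u -> X0 s O (fun x => Num.min (u x) 0).
Proof.
move=> p0 [bu [u0 [uLp ugag]]]; split; [|split; [|split]].
- move=> B mB.
  have := measurable_minr (@measurable_id _ R setT) (measurable_cst (0 : R)) measurableT mB.
  by rewrite setTI => /bu.
- by move=> x /u0 ->; rewrite minxx.
- apply: le_lt_trans uLp; apply: nnint_le => x.
  by apply: ge0_ler_powR; rewrite ?nnegrE ?normr_ge0 ?norm_min0_le.
- apply: le_lt_trans ugag; apply: nnint_le => z.
  apply: ler_pM; rewrite ?powR_ge0 ?invr_ge0 ?exprn_ge0 ?enorm_ge0 //.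
  by apply: ge0_ler_powR; rewrite ?nnegrE ?normr_ge0 ?norm_min0_sub_le.
Qed.

Lemma rint_gfun_min0 n (O : set 'rV[R]_n) h (s : R) (K u : 'rV[R]_n -> R) :
  g1 O h -> rint (fun x => indR O x * K x * gfun s h x (u x) * Num.min (u x) 0) = 0.
Proof.
move=> [_ [h_neg _]]; rewrite -[RHS](rint_cst0 n); congr rint; apply/funext => x.
rewrite /indR; case: asboolP => Ox; last by rewrite !mul0r.
have [ux0|_] := leP (u x) 0; last by rewrite mulr0.
by rewrite /gfun h_neg ?(mul0r, mulr0) //; exact: subset_closure.
Qed.

Lemma M3_gt0 {M : R -> R} {b : R} : M3 M -> 0 < b -> 0 < M b.
Proof. by move=> M3M /M3M [k [k_gt0 Mk]]; exact: lt_le_trans k_gt0 (Mk _ (lexx b)). Qed.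

Lemma gagliardo_gt0 {n} {s : R} {O : set 'rV[R]_n.+1} {u : 'rV[R]_n.+1 -> R} :
  0 < pexp n.+1 s -> Defs.bounded_set O -> X0 s O u ->
  nnint (indR [set y | u y <> 0]) <> 0%E -> 0 < fine (gagliardo s u).
Proof.
move=> p0 bO [bu [u0 [_ gag_fin]]] u_nz.
apply: fine_gt0; rewrite gag_fin andbT lt_neqAle nnint_ge0 andbT eq_sym.
by apply/eqP => /(support_null_of_gagliardo_eq0 p0 bO bu u0).
Qed.

Lemma gagliardo_min0_eq0 {n} {s : R} {u : 'rV[R]_n -> R} :
  2 <= pexp n s -> (gagliardo s u < +oo)%E ->
  rint2 (fun x y => powR `|u x - u y| (pexp n s - 2) * (u x - u y)
    * (Num.min (u x) 0 - Num.min (u y) 0) / enorm (x - y) ^+ (2 * n)) = 0 ->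
  gagliardo s (fun x => Num.min (u x) 0) = 0%E.
Proof.
set p := pexp n s => p2 gag_fin.
set F := fun x y => _ => pair0.
have F_bounds x y :
    powR `|Num.min (u x) 0 - Num.min (u y) 0| p / enorm (x - y) ^+ (2 * n)
    <= F x y <= powR `|u x - u y| p / enorm (x - y) ^+ (2 * n).
  have E_ge0 : 0 <= (enorm (x - y) ^+ (2 * n))^-1.
    by rewrite invr_ge0 exprn_ge0 ?enorm_ge0.
  by have /andP[lo hi] := powR_sub_min0_bounds (u x) (u y) p p2; rewrite !ler_wpM2r.
have F_ge0 x y : 0 <= F x y.
  apply: le_trans (andP (F_bounds x y)).1.
  by rewrite divr_ge0 ?powR_ge0 ?exprn_ge0 ?enorm_ge0.
have F_fin : nnint2 F \is a fin_num.
  rewrite ge0_fin_numE ?nnint_ge0 //; apply: le_lt_trans gag_fin.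
  by apply: nnint_le => z; case/andP: (F_bounds (lsubmx z) (rsubmx z)).
have F_eq0 : nnint2 F = 0%E.
  by rewrite -(fineK F_fin); move: pair0; rewrite /rint2 rint_ge0E => [->|z].
apply/le_anti; rewrite nnint_ge0 andbT -F_eq0.
by apply: nnint_le => z; case/andP: (F_bounds (lsubmx z) (rsubmx z)).
Qed.

Lemma min0_neq0E {n} (O : set 'rV[R]_n) (u : 'rV[R]_n -> R) :
  (forall x, ~ O x -> u x = 0) ->
  [set y | O y /\ u y < 0] = [set y | Num.min (u y) 0 <> 0].
Proof.
move=> u0; apply/seteqP; split => y /=.
  by case=> _ uy; rewrite min_l ?ltW // => uy0; rewrite uy0 ltxx in uy.
have [uy _|_] := ltP (u y) 0; last by move/(_ erefl).
by split=> //; apply: contrapT => /u0 uy0; rewrite uy0 ltxx in uy.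
Qed.

End GagliardoSeminorm.

Theorem lemma3p9 (R : realType) (n : nat) (s mu gam l : R)
    (Omega : set 'rV[R]_n) (M : R -> R) (h : 'rV[R]_n -> R -> R)
    (u : 'rV[R]_n -> R) :
  (1 <= n)%N -> 0 < s < 1 -> 2 <= pexp n s ->
  bounded_lipschitz_domain Omega ->
  0 < mu < n%:R ->
  M_basic M -> M1 M -> M2 M gam -> M3 M ->
  g1 Omega h -> g2 s Omega h -> g3 s Omega h ->
  l > gam * n%:R / (2 * s) - 1 -> g4 s Omega h l ->
  weak_solution s mu Omega M h u ->
  nnint (fun x => indR (fun y => u y <> 0) x) <> 0%E ->
  nnint (fun x => indR (fun y => Omega y /\ u y < 0) x) = 0%E.
Proof.
case: n Omega h u => [//|n] Omega h u _ _ p2 [_ [_ [_ [bO _]]]] _ _ _ _ M3_M g1h _ _ _ _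
  [Xu weak] u_nz.
have p_gt0 : 0 < pexp n.+1 s by lra.
have Xphi := X0_min0 (ltW p_gt0) Xu.
have M_gt0 : 0 < M (powR (X0norm s u) (pexp n.+1 s)).
  exact/(M3_gt0 M3_M)/powR_gt0/powR_gt0/(gagliardo_gt0 p_gt0 bO Xu u_nz).
have := weak _ Xphi; rewrite rint_gfun_min0 // => /eqP.
rewrite mulf_eq0 gt_eqF //= => /eqP pairing_eq0.
rewrite (_ : (fun y => Omega y /\ u y < 0) = [set y | Num.min (u y) 0 <> 0]).
  have [bphi [phi0 _]] := Xphi.
  apply: (support_null_of_gagliardo_eq0 p_gt0 bO bphi phi0).
  exact: gagliardo_min0_eq0 p2 Xu.2.2.2 pairing_eq0.
by apply: min0_neq0E; case: Xu => _ [].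
Qed.
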